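(* Let $\mathcal{H}$ be a complex Hilbert space, $A\in\mathcal{B}(\mathcal{H})$ positive and $S\in\mathcal{B}_A(\mathcal{H})$. Then $$d\omega_A^2(S)\le\frac14\left\|S^{\sharp_A}S+SS^{\sharp_A}+4\left(S^{\sharp_A}S\right)^2\right\|_A+\frac12\,\omega_A\left(S^2\right).$$
   Context: $\mathcal{B}(\mathcal{H})$ denotes the bounded linear operators on $\mathcal{H}$. For positive $A$, $\langle x,z\rangle_A=\langle Ax,z\rangle$ and $\|z\|_A=\|A^{1/2}z\|$. $\mathcal{B}_A(\mathcal{H})$ is the set of $S\in\mathcal{B}(\mathcal{H})$ for which some $R\in\mathcal{B}(\mathcal{H})$ satisfies $AR=S^*A$; for such $S$, $S^{\sharp_A}=A^{\dagger}S^*A$ with $A^\dagger$ the Moore–Penrose inverse of $A$. For operators $T$ bounded with respect to $\|\cdot\|_A$: $\|T\|_A=\sup_{\|z\|_A=1}\|Tz\|_A$, $\omega_A(T)=\sup_{\|z\|_A=1}|\langle Tz,z\rangle_A|$, and $d\omega_A(T)=\sup_{\|z\|_A=1}(|\langle Tz,z\rangle_A|^2+\|Tz\|_A^4)^{1/2}$. *)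

From HB Require Import structures.
From mathcomp Require Import all_boot all_order all_algebra.
From mathcomp Require Import boolp classical_sets reals ereal.
From mathcomp Require Import complex.
Set Implicit Arguments. Unset Strict Implicit. Unset Printing Implicit Defensive.
Import Order.TTheory GRing.Theory Num.Theory.
Local Open Scope ring_scope.
Local Open Scope classical_set_scope.

Section Hilbert.
Variables (R : realType) (V : lmodType R[i]) (ip : V -> V -> R[i]).

Definition hnorm (x : V) : R := Num.sqrt (complex.Re (ip x x)).

Definition is_inner_product : Prop :=
  [/\ (forall (a : R[i]) (x y z : V), ip (a *: x + y) z = a * ip x z + ip y z),
      (forall x y : V, ip y x = conjc (ip x y)),
      (forall x : V, 0 <= ip x x) &
      (forall x : V, ip x x = 0 -> x = 0)].

Definition is_complete : Prop :=
  forall u : nat -> V,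
    (forall e : R, 0 < e -> exists N : nat, forall m n : nat,
        (N <= m)%N -> (N <= n)%N -> hnorm (u m - u n) < e) ->
    exists l : V, forall e : R, 0 < e -> exists N : nat, forall n : nat,
        (N <= n)%N -> hnorm (u n - l) < e.

Definition is_hilbert : Prop := is_inner_product /\ is_complete.

Definition bounded_op (T : V -> V) : Prop :=
  (forall (a : R[i]) (x y : V), T (a *: x + y) = a *: T x + T y) /\
  exists M : R, forall x : V, hnorm (T x) <= M * hnorm x.

Definition adjoint (T : V -> V) : V -> V :=
  fun y => xget 0 [set w : V | forall x : V, ip (T x) y = ip x w].

Definition positive_op (A : V -> V) : Prop :=
  bounded_op A /\ forall x : V, 0 <= ip (A x) x.

Definition in_BA (A S : V -> V) : Prop :=
  bounded_op S /\
  exists Rop : V -> V, bounded_op Rop /\ forall x : V, A (Rop x) = adjoint S (A x).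

(* Moore-Penrose inverse A^dagger evaluated on the range of A:
   A^dagger y is the unique x in N(A)^perp with A x = y. *)
Definition mpinv (A : V -> V) (y : V) : V :=
  xget 0 [set x : V | (forall k : V, A k = 0 -> ip x k = 0) /\ A x = y].

Definition sharpA (A S : V -> V) : V -> V :=
  fun z => mpinv A (adjoint S (A z)).

(* ||z||_A = ||A^{1/2} z|| = sqrt <A z, z> *)
Definition normA (A : V -> V) (z : V) : R := Num.sqrt (complex.Re (ip (A z) z)).

Definition unitA (A : V -> V) : set V := [set z | normA A z = 1].

(* supremum of a set of nonnegative quantities (sup of the empty set is 0) *)
Definition sup0 (E : set (\bar R)) : \bar R := ereal_sup (E `|` [set 0%E]).

Definition opnormA (A T : V -> V) : \bar R :=
  sup0 [set (normA A (T z))%:E | z in unitA A].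

Definition omegaA (A T : V -> V) : \bar R :=
  sup0 [set (ComplexField.Normc.normc (ip (A (T z)) z))%:E | z in unitA A].

Definition domegaA (A T : V -> V) : \bar R :=
  sup0 [set (Num.sqrt (ComplexField.Normc.normc (ip (A (T z)) z) ^+ 2 + normA A (T z) ^+ 4))%:E
       | z in unitA A].

End Hilbert.

(* Put q(x, y) = <A x, y>.  Positivity of A makes q a Hermitian semi-inner product
   (polarization), and S^#A is the q-adjoint of S: q(S^#A x, y) = q(x, S y).  The latter
   needs the Riesz representation (for the Hilbert adjoint of S) and the orthogonal
   projection onto ker A (for A^dagger), both obtained from the nearest-point theorem in
   the complete space.
   For a q-unit vector z let v = 2 q(S^#A z, z) z - S^#A z, the reflection of S^#A z in
   the line through z: then ||v|| = ||S^#A z|| and q(S z, v) = 2 q(S z, z)^2 - q(S^2 z, z),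
   so Cauchy-Schwarz, AM-GM and the triangle inequality give
     2 |q(S z, z)|^2 <= (||S z||^2 + ||S^#A z||^2) / 2 + |q(S^2 z, z)|.
   Also ||S z||^4 = (Re q(S^#A S z, z))^2 <= ||S^#A S z||^2.  Adding up,
     |q(S z, z)|^2 + ||S z||^4 <= Re q(T z, z) / 4 + |q(S^2 z, z)| / 2
   with T = S^#A S + S S^#A + 4 (S^#A S)^2, and Re q(T z, z) <= ||T z||; taking suprema
   over z gives the theorem. *)

From Pilot Require Import Defs.
From HB Require Import structures.
From mathcomp Require Import all_boot all_order all_algebra.
From mathcomp Require Import boolp classical_sets reals ereal.
From mathcomp Require Import complex.
From mathcomp Require Import ring lra.
Import Order.TTheory GRing.Theory Num.Theory.
Import ComplexField.Normc.

Set Implicit Arguments.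
Unset Strict Implicit.
Unset Printing Implicit Defensive.

Local Open Scope ring_scope.
Local Open Scope complex_scope.
Local Open Scope classical_set_scope.

Section LinearMap.
Variables (R : realType) (U W : lmodType R[i]) (f : U -> W).
Hypothesis f_lin : forall a x y, f (a *: x + y) = a *: f x + f y.

Lemma lmap0 : f 0 = 0.
Proof.
have := f_lin 1 0 0; rewrite scaler0 addr0 scale1r => f00.
by apply: (addIr (f 0)); rewrite add0r -f00.
Qed.

Lemma lmapD x y : f (x + y) = f x + f y.
Proof. by rewrite -{1}(scale1r x) f_lin scale1r. Qed.

Lemma lmapZ a x : f (a *: x) = a *: f x.
Proof. by rewrite -(addr0 (a *: x)) f_lin lmap0 addr0. Qed.

Lemma lmapB x y : f (x - y) = f x - f y.
Proof. by rewrite lmapD -scaleN1r lmapZ scaleN1r. Qed.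

End LinearMap.

Section ComplexNorm.
Variable R : realType.
Implicit Types c : R[i].

Lemma normc_ge0 c : 0 <= normc c.
Proof. by case: c => a b; rewrite sqrtr_ge0. Qed.

Lemma normc_sqr c : normc c ^+ 2 = complex.Re c ^+ 2 + complex.Im c ^+ 2.
Proof. by case: c => a b /=; rewrite sqr_sqrtr // addr_ge0 // sqr_ge0. Qed.

Lemma Re_le_normc c : complex.Re c <= normc c.
Proof.
case: c => a b /=; apply: le_trans (ler_norm a) _.
by rewrite -sqrtr_sqr ler_sqrt ?lerDl ?sqr_ge0 // addr_ge0 ?sqr_ge0.
Qed.

Lemma Re_conjc c : complex.Re (conjc c) = complex.Re c.
Proof. by case: c. Qed.

Lemma normc_le_sqrt c (x : R) : normc c ^+ 2 <= x -> normc c <= Num.sqrt x.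
Proof.
move=> le_cx; rewrite -(ger0_norm (normc_ge0 c)) -sqrtr_sqr ler_sqrt //.
exact: le_trans (sqr_ge0 _) le_cx.
Qed.
End ComplexNorm.

Lemma ler_of_quadratic_ge0 (R : realFieldType) (a b k : R) : 0 <= k -> 0 <= b ->
  (forall t, 0 <= a - 2 * t * k + t ^+ 2 * k * b) -> k <= a * b.
Proof.
move=> k_ge0 b_ge0 quad_ge0; have [b0|b_gt0] := eqVneq b 0.
  rewrite b0 mulr0; have [->//|k_neq0] := eqVneq k 0.
  have := quad_ge0 ((a + 1) / (2 * k)); rewrite b0 mulr0 addr0.
  have -> : a - 2 * ((a + 1) / (2 * k)) * k = -1 by field.
  by rewrite ler0N1.
have := quad_ge0 b^-1.
have -> : a - 2 * b^-1 * k + b^-1 ^+ 2 * k * b = (a * b - k) / b by field.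
by rewrite pmulr_lge0 ?invr_gt0 ?lt_def ?b_gt0 // subr_ge0.
Qed.

Lemma hermitian_of_real_diag (R : realType) (V : lmodType R[i]) (f : V -> V -> R[i]) :
    (forall x y z, f (x + y) z = f x z + f y z) ->
    (forall a x z, f (a *: x) z = a * f x z) ->
    (forall x y z, f x (y + z) = f x y + f x z) ->
    (forall a x z, f x (a *: z) = conjc a * f x z) ->
    (forall x, complex.Im (f x x) = 0) ->
  forall x y, f y x = conjc (f x y).
Proof.
move=> fDl fZl fDr fZr f_diag x y.
have := f_diag (x + y); have := f_diag (x + 'i%C *: y).
rewrite !(fDl, fDr, fZl, fZr); move: (f_diag x) (f_diag y).
case: (f x y) (f y x) (f x x) (f y y) => [a b] [c d] [? ?] [? ?] /= ? ? ? ?.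
by apply/eqP; rewrite eq_complex /=; apply/andP; split; apply/eqP; lra.
Qed.

Section SesquilinearForm.
Variables (R : realType) (V : lmodType R[i]) (q : V -> V -> R[i]).
Hypothesis formL : forall a x y z, q (a *: x + y) z = a * q x z + q y z.

Let formL_at z : forall a x y, q (a *: x + y) z = a *: q x z + q y z.
Proof. exact: (fun a x y => formL a x y z). Qed.

Lemma sesq0l z : q 0 z = 0.
Proof. exact: (@lmap0 _ _ _ (fun v => q v z) (formL_at z)). Qed.
Lemma sesqDl x y z : q (x + y) z = q x z + q y z.
Proof. exact: (@lmapD _ _ _ (fun v => q v z) (formL_at z)). Qed.
Lemma sesqZl a x z : q (a *: x) z = a * q x z.
Proof. exact: (@lmapZ _ _ _ (fun v => q v z) (formL_at z)). Qed.
Lemma sesqBl x y z : q (x - y) z = q x z - q y z.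
Proof. exact: (@lmapB _ _ _ (fun v => q v z) (formL_at z)). Qed.

Hypothesis formH : forall x y, q y x = conjc (q x y).

Lemma sesq0r x : q x 0 = 0. Proof. by rewrite formH sesq0l rmorph0. Qed.
Lemma sesqDr x y z : q x (y + z) = q x y + q x z.
Proof. by rewrite formH sesqDl rmorphD /= -!formH. Qed.
Lemma sesqZr a x z : q x (a *: z) = conjc a * q x z.
Proof. by rewrite formH sesqZl rmorphM /= -formH. Qed.
Lemma sesqBr x y z : q x (y - z) = q x y - q x z.
Proof. by rewrite formH sesqBl rmorphB /= -!formH. Qed.

Hypothesis formP : forall x, 0 <= q x x.

Definition sqnorm x := complex.Re (q x x).

Lemma form_diag x : q x x = (sqnorm x)%:C.
Proof. by rewrite /sqnorm; have := ger0_Im (formP x); case: (q x x) => a b /= ->. Qed.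

Lemma hnormE x : hnorm q x = Num.sqrt (sqnorm x). Proof. by []. Qed.

Lemma sqnorm_ge0 x : 0 <= sqnorm x.
Proof. by have := formP x; rewrite lecE => /andP[]. Qed.

Lemma sqnormDZ x y c : sqnorm (x + c *: y) =
  sqnorm x + 2 * complex.Re (conjc c * q x y) + normc c ^+ 2 * sqnorm y.
Proof.
rewrite {1}/sqnorm sesqDl !sesqDr !sesqZl !sesqZr (formH x y) !form_diag normc_sqr.
by case: c (q x y) => a b [u v] /=; ring.
Qed.

Lemma sqnormZ c x : sqnorm (c *: x) = normc c ^+ 2 * sqnorm x.
Proof.
by rewrite -[c *: x]add0r sqnormDZ sesq0l mulr0 {1}/sqnorm sesq0l /= mulr0 !add0r.
Qed.

Lemma sqnormN x : sqnorm (- x) = sqnorm x.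
Proof. by rewrite -scaleN1r sqnormZ normcN normc1 expr1n mul1r. Qed.

Lemma parallelogram x y : sqnorm (x + y) + sqnorm (x - y) = 2 * sqnorm x + 2 * sqnorm y.
Proof.
have := sqnormDZ x y 1; have := sqnormDZ x y (-1).
rewrite scale1r scaleN1r normcN normc1 => -> ->.
by rewrite rmorphN1 rmorph1 mulN1r mul1r; case: (q x y) => a b /=; ring.
Qed.

Lemma sqnormDZ_proj x y (t : R) : sqnorm (x + (t%:C * q x y) *: y) =
  sqnorm x + 2 * t * normc (q x y) ^+ 2 + t ^+ 2 * normc (q x y) ^+ 2 * sqnorm y.
Proof. by rewrite sqnormDZ !normc_sqr; case: (q x y) => a b /=; ring. Qed.

Lemma cauchy_schwarz x y : normc (q x y) ^+ 2 <= sqnorm x * sqnorm y.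
Proof.
apply: ler_of_quadratic_ge0; rewrite ?sqr_ge0 ?sqnorm_ge0 // => t.
have := sqnorm_ge0 (x + ((- t)%:C * q x y) *: y).
by rewrite sqnormDZ_proj mulrN mulNr sqrrN.
Qed.

Lemma normc_form_le x y : normc (q x y) <= hnorm q x * hnorm q y.
Proof. by rewrite -sqrtrM ?sqnorm_ge0 //; apply/normc_le_sqrt/cauchy_schwarz. Qed.

Lemma hnorm_opp x : hnorm q (- x) = hnorm q x.
Proof. by rewrite !hnormE sqnormN. Qed.

Lemma ler_hnormD x y : hnorm q (x + y) <= hnorm q x + hnorm q y.
Proof.
have [hx hy] := (sqrtr_ge0 (sqnorm x), sqrtr_ge0 (sqnorm y)).
have := le_trans (Re_le_normc (q x y)) (normc_form_le x y).
rewrite !hnormE => le_Re.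
rewrite -[X in _ <= X]ger0_norm ?addr_ge0 // -sqrtr_sqr ler_sqrt ?sqr_ge0 //.
rewrite sqrrD !sqr_sqrtr ?sqnorm_ge0 //.
have := sqnormDZ x y 1; rewrite scale1r normc1 expr1n mul1r rmorph1 mul1r => ->.
lra.
Qed.

Variable M : set V.
Hypothesis MD : forall x y, M x -> M y -> M (x + y).
Hypothesis MZ : forall a x, M x -> M (a *: x).

Lemma nearest_orthogonal r l : M l ->
    (forall m, M m -> sqnorm (r - l) <= sqnorm (r - m)) ->
  forall m, M m -> q (r - l) m = 0.
Proof.
move=> Ml l_min m Mm; apply: eq0_normc; apply/eqP; rewrite -sqrf_eq0 eq_le sqr_ge0 andbT.
rewrite -(mul0r (sqnorm m)); apply: ler_of_quadratic_ge0; rewrite ?sqr_ge0 ?sqnorm_ge0 // => t.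
have := l_min _ (MD Ml (MZ (- ((- t)%:C * q (r - l) m)) Mm)).
rewrite opprD addrA scaleNr opprK sqnormDZ_proj mulrN mulNr sqrrN; lra.
Qed.

Lemma almost_nearest_close r (D a b : R) u v :
    (forall m, M m -> D <= sqnorm (r - m)) -> M u -> M v ->
    sqnorm (r - u) <= D + a -> sqnorm (r - v) <= D + b ->
  sqnorm (u - v) <= 2 * a + 2 * b.
Proof.
move=> D_le Mu Mv near_u near_v.
have := D_le _ (MZ 2^-1 (MD Mu Mv)); have := parallelogram (r - v) (r - u).
have -> : r - v - (r - u) = u - v by rewrite opprB addrC addrA subrK.
have -> : r - v + (r - u) = 2 *: (r - 2^-1 *: (u + v)).
  rewrite scalerBr scalerA mulfV ?pnatr_eq0 // scale1r scaler_nat mulr2n.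
  by rewrite opprD addrACA (addrC (- v)).
rewrite sqnormZ normcMn normc1 => parallel; lra.
Qed.

End SesquilinearForm.

Lemma eventually_inv_lt (R : archiFieldType) (e : R) : 0 < e ->
  exists N, forall n, (N <= n)%N -> n.+1%:R^-1 < e.
Proof.
move=> e_gt0; exists (Num.bound e^-1) => n le_Nn.
rewrite -[e]invrK ltf_pV2 ?posrE ?invr_gt0 //.
have bound_gt : e^-1 < (Num.bound e^-1)%:R by apply: archi_boundP; rewrite invr_ge0 ltW.
by apply: lt_le_trans bound_gt _; rewrite ler_nat leqW.
Qed.

Section Nearest.
Variables (R : realType) (V : lmodType R[i]) (ip : V -> V -> R[i]).
Hypothesis ipL : forall a x y z, ip (a *: x + y) z = a * ip x z + ip y z.
Hypothesis ipH : forall x y, ip y x = conjc (ip x y).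
Hypothesis ipP : forall x, 0 <= ip x x.
Hypothesis ip_complete : is_complete ip.

Variable M : set V.
Hypothesis M0 : M 0.
Hypothesis MD : forall x y, M x -> M y -> M (x + y).
Hypothesis MZ : forall a x, M x -> M (a *: x).
Hypothesis M_closed :
  forall l, (forall e, 0 < e -> exists2 m, M m & hnorm ip (l - m) < e) -> M l.

Variable r : V.

Let dists := [set sqnorm ip (r - m) | m in M].
Let dist2 := inf dists.

Let dists_inf : has_inf dists.
Proof. by split; [exists (sqnorm ip (r - 0)), 0 | exists 0 => _ [m _ <-]; apply: sqnorm_ge0]. Qed.

Let dist2_le m : M m -> dist2 <= sqnorm ip (r - m).
Proof. by move=> Mm; apply: (ge_inf dists_inf.2); exists m. Qed.

Let minimizing_seq : {u : nat -> V &
  forall n, M (u n) /\ sqnorm ip (r - u n) < dist2 + n.+1%:R^-1}.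
Proof.
apply: (@choice _ _ (fun n m => M m /\ sqnorm ip (r - m) < dist2 + n.+1%:R^-1)) => n.
have inv_gt0 : 0 < n.+1%:R^-1 :> R by rewrite invr_gt0.
by have [_ [m Mm <-] near_m] := inf_adherent inv_gt0 dists_inf; exists m.
Qed.

Lemma exists_nearest : exists2 l, M l & forall m, M m -> sqnorm ip (r - l) <= sqnorm ip (r - m).
Proof.
have [u u_near] := minimizing_seq.
have [l u_to_l] : exists l, forall e, 0 < e -> exists N, forall n, (N <= n)%N ->
    hnorm ip (u n - l) < e.
  apply: ip_complete => e e_gt0.
  have [N inv_lt] : exists N, forall n, (N <= n)%N -> n.+1%:R^-1 < e ^+ 2 / 4.
    by apply: eventually_inv_lt; rewrite divr_gt0 ?exprn_gt0.
  exists N => m n le_Nm le_Nn; rewrite hnormE -[e]gtr0_norm // -sqrtr_sqr ltr_sqrt ?exprn_gt0 //.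
  have [[Mum near_um] [Mun near_un]] := (u_near m, u_near n).
  have := almost_nearest_close ipL ipH ipP MD MZ dist2_le Mum Mun (ltW near_um) (ltW near_un).
  have := inv_lt _ le_Nm; have := inv_lt _ le_Nn.
  by move: m.+1%:R^-1 n.+1%:R^-1 (e ^+ 2) => a b c; lra.
have dist2_ge0 : 0 <= dist2.
  by apply: lb_le_inf dists_inf.1 _ => _ [m _ <-]; apply: sqnorm_ge0.
exists l => [|m Mm].
  apply: M_closed => e /u_to_l [N lim]; exists (u N); first exact: (u_near N).1.
  by rewrite -(hnorm_opp ipL ipH ipP) opprB; apply: lim.
apply: le_trans (dist2_le Mm); rewrite -ler_sqrt // -hnormE.
apply/ler_addgt0Pr => e e_gt0; have e2_gt0 : 0 < e / 2 by rewrite divr_gt0.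
have [N1 lim] := u_to_l _ e2_gt0.
have [N2 inv_lt] := eventually_inv_lt (exprn_gt0 2 e2_gt0).
pose n := maxn N1 N2; have [_ near_un] := u_near n.
have := ler_hnormD ipL ipH ipP (r - u n) (u n - l); rewrite addrA subrK.
have : hnorm ip (r - u n) <= Num.sqrt dist2 + e / 2.
  have bound_ge0 : 0 <= Num.sqrt dist2 + e / 2 by rewrite addr_ge0 ?sqrtr_ge0 ?ltW.
  rewrite hnormE -(ger0_norm bound_ge0) -sqrtr_sqr ler_sqrt ?sqr_ge0 // sqrrD sqr_sqrtr //.
  have := inv_lt n (leq_maxr _ _); have := mulr_ge0 (sqrtr_ge0 dist2) (ltW e_gt0).
  by move: near_un; move: n.+1%:R^-1 => a; lra.
by have := lim n (leq_maxl _ _); lra.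
Qed.

Lemma orthogonal_projection : exists2 p, M p & forall m, M m -> ip (r - p) m = 0.
Proof.
have [p Mp p_min] := exists_nearest.
by exists p => // m; apply: (nearest_orthogonal ipL ipH ipP MD MZ Mp p_min).
Qed.

End Nearest.

Section HilbertSpace.
Variables (R : realType) (V : lmodType R[i]) (ip : V -> V -> R[i]).
Hypothesis ipL : forall a x y z, ip (a *: x + y) z = a * ip x z + ip y z.
Hypothesis ipH : forall x y, ip y x = conjc (ip x y).
Hypothesis ipP : forall x, 0 <= ip x x.
Hypothesis ip_def : forall x, ip x x = 0 -> x = 0.
Hypothesis ip_complete : is_complete ip.

Lemma hnorm_le0 x : hnorm ip x <= 0 -> x = 0.
Proof.
rewrite hnormE -(sqrtr0 R) ler_sqrt // => le0; apply/ip_def.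
by rewrite form_diag //; congr (_%:C); apply/le_anti; rewrite le0 sqnorm_ge0.
Qed.

Lemma kernel_closed (W : lmodType R[i]) (f : V -> W) (nu : W -> R) (C : R) :
    (forall a x y, f (a *: x + y) = a *: f x + f y) ->
    (forall w, nu w <= 0 -> w = 0) -> (forall x, nu (f x) <= C * hnorm ip x) ->
  forall l, (forall e, 0 < e -> exists2 m, f m = 0 & hnorm ip (l - m) < e) -> f l = 0.
Proof.
move=> f_lin nu_le0 f_bounded l l_approx; apply/nu_le0/ler_addgt0Pr => e e_gt0.
have C1_gt0 : 0 < `|C| + 1 by rewrite ltr_pwDr ?normr_ge0.
have [m fm0 near_m] := l_approx _ (divr_gt0 e_gt0 C1_gt0).
have := f_bounded (l - m); rewrite lmapB // fm0 subr0 add0r => /le_trans; apply.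
rewrite ltr_pdivlMr // in near_m.
have := ler_wpM2r (sqrtr_ge0 (sqnorm ip (l - m))) (ler_norm C); rewrite -hnormE.
have := sqrtr_ge0 (sqnorm ip (l - m)); rewrite -hnormE; lra.
Qed.

Lemma kernel_projection (W : lmodType R[i]) (f : V -> W) (nu : W -> R) (C : R) :
    (forall a x y, f (a *: x + y) = a *: f x + f y) ->
    (forall w, nu w <= 0 -> w = 0) -> (forall x, nu (f x) <= C * hnorm ip x) ->
  forall r, exists2 p, f p = 0 & forall m, f m = 0 -> ip (r - p) m = 0.
Proof.
move=> f_lin nu_le0 f_bounded; apply: orthogonal_projection => //.
- exact: lmap0.
- by move=> x y; rewrite (lmapD f_lin) => -> ->; rewrite addr0.
- by move=> a x; rewrite (lmapZ f_lin) => ->; rewrite scaler0.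
- exact: kernel_closed f_lin nu_le0 f_bounded.
Qed.

Lemma riesz_representation (g : V -> R[i]) (C : R) :
    (forall a x y, g (a *: x + y) = a * g x + g y) ->
    (forall x, normc (g x) <= C * hnorm ip x) ->
  exists w, forall u, g u = ip u w.
Proof.
move=> g_lin g_bounded.
have g_lmap : forall a x y, g (a *: x + y) = a *: g x + g y := g_lin.
have [[u0 gu0_neq0]|g0] := pselect (exists u0, g u0 != 0); last first.
  exists 0 => u; rewrite (sesq0r ipL ipH); apply/eqP/negPn/negP => gu_neq0.
  by apply: g0; exists u.
have normc_le0 (c : R[i]) : normc c <= 0 -> c = 0.
  by move=> c_le0; apply/eq0_normc/le_anti; rewrite c_le0 normc_ge0.
have [p gp0 p_perp] := kernel_projection g_lmap normc_le0 g_bounded u0.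
pose e := u0 - p.
have ge_neq0 : g e != 0 by rewrite /e (lmapB g_lmap) gp0 subr0.
have ee_neq0 : ip e e != 0 by apply: contraNneq ge_neq0 => /ip_def ->; rewrite (lmap0 g_lmap).
exists (conjc (g e / ip e e) *: e) => u; rewrite (sesqZr ipL ipH) conjcK.
have Ku : g ((- (g u / g e)) *: e + u) = 0 by rewrite g_lin mulNr divfK // addNr.
have := p_perp _ Ku; rewrite ipH => /eqP.
rewrite conjc_eq0 ipL addrC addr_eq0 mulNr opprK => /eqP ->.
by field; apply/andP.
Qed.

Lemma adjointP S : bounded_op ip S -> forall x y, ip (S x) y = ip x (adjoint ip S y).
Proof.
move=> [S_lin [C S_bounded]] x y; move: x.
apply: (xgetPex 0 (P := [set w | forall x, ip (S x) y = ip x w])).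
apply: (riesz_representation (C := C * hnorm ip y)) => [a x x'|x].
  by rewrite S_lin ipL.
apply: le_trans (normc_form_le ipL ipH ipP _ _) _.
by rewrite mulrAC ler_wpM2r ?sqrtr_ge0.
Qed.

Lemma mpinvP A : bounded_op ip A -> forall r, A (mpinv ip A (A r)) = A r.
Proof.
move=> [A_lin [C A_bounded]] r.
have [p Ap0 p_perp] := kernel_projection A_lin hnorm_le0 A_bounded r.
suff [] : (forall k, A k = 0 -> ip (mpinv ip A (A r)) k = 0) /\ A (mpinv ip A (A r)) = A r by [].
apply: (xgetPex 0 (P := [set x | (forall k, A k = 0 -> ip x k = 0) /\ A x = A r])).
exists (r - p); split => [k|]; first exact: p_perp.
by rewrite (lmapB A_lin) Ap0 subr0.
Qed.

Lemma sharpA_adjoint A S : positive_op ip A -> in_BA ip A S ->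
  forall x y, ip (A (sharpA ip A S x)) y = ip (A x) (S y).
Proof.
move=> [A_bounded _] [S_bounded [Rop [_ A_Rop]]] x y.
by rewrite /sharpA -A_Rop mpinvP // A_Rop ipH -adjointP // -ipH.
Qed.

End HilbertSpace.

Section SharpEstimates.
Variables (R : realType) (V : lmodType R[i]) (q : V -> V -> R[i]).
Hypothesis formL : forall a x y z, q (a *: x + y) z = a * q x z + q y z.
Hypothesis formH : forall x y, q y x = conjc (q x y).
Hypothesis formP : forall x, 0 <= q x x.
Variables S Ss : V -> V.
Hypothesis sharpP : forall x y, q (Ss x) y = q x (S y).

Local Notation sqnorm := (sqnorm q).

Lemma sqnorm_mulE x : sqnorm (S x) = complex.Re (q (Ss (S x)) x).
Proof. by rewrite sharpP. Qed.

Lemma sqnorm_sharpE x : sqnorm (Ss x) = complex.Re (q (S (Ss x)) x).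
Proof. by rewrite /sqnorm sharpP formH Re_conjc. Qed.

Lemma sqnorm_sharp_mulE x : sqnorm (Ss (S x)) = complex.Re (q (Ss (S (Ss (S x)))) x).
Proof. by rewrite sqnorm_sharpE -sharpP. Qed.

Variable z : V.
Hypothesis z_unit : sqnorm z = 1.

Lemma Re_form_le_hnorm w : complex.Re (q w z) <= hnorm q w.
Proof.
apply: le_trans (Re_le_normc _) _; apply: le_trans (normc_form_le formL formH formP _ _) _.
by rewrite [hnorm q z]hnormE z_unit sqrtr1 mulr1.
Qed.

Lemma sqr_sqnorm_mul_le : sqnorm (S z) ^+ 2 <= sqnorm (Ss (S z)).
Proof.
have := Re_form_le_hnorm (Ss (S z)); rewrite -sqnorm_mulE hnormE => le_sqrt.
rewrite -[X in _ <= X](sqr_sqrtr (sqnorm_ge0 formP _)).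
by have := sqnorm_ge0 formP (S z); move: le_sqrt; move: (Num.sqrt _) => s; nra.
Qed.

Lemma sqnorm_reflect x : sqnorm ((2 * q x z) *: z - x) = sqnorm x.
Proof.
rewrite -scaleN1r sqnormDZ // normcN normc1 expr1n mul1r rmorphN1 mulN1r.
rewrite sqnormZ // z_unit mulr1 (sesqZl formL) (formH x z) normc_sqr.
by case: (q x z) => a b; simpc => /=; ring.
Qed.

Lemma form_reflect :
  q (S z) ((2 * q (Ss z) z) *: z - Ss z) = 2 * q (S z) z ^+ 2 - q (S (S z)) z.
Proof.
rewrite (sesqBr formL formH) (sesqZr formL formH) sharpP rmorphM rmorph_nat /= -formH.
rewrite (formH (Ss z)) sharpP -formH.
by rewrite expr2 mulrA.
Qed.

Lemma sqr_normc_form_le :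
  2 * normc (q (S z) z) ^+ 2 <= (sqnorm (S z) + sqnorm (Ss z)) / 2 + normc (q (S (S z)) z).
Proof.
have := cauchy_schwarz formL formH formP (S z) ((2 * q (Ss z) z) *: z - Ss z).
rewrite form_reflect sqnorm_reflect.
set c1 := q (S z) z; set c2 := q (S (S z)) z; set N := normc (2 * c1 ^+ 2 - c2) => cs.
have N_le : N <= (sqnorm (S z) + sqnorm (Ss z)) / 2.
  have := normc_ge0 (2 * c1 ^+ 2 - c2); rewrite -/N.
  have := sqnorm_ge0 formP (S z); have := sqnorm_ge0 formP (Ss z).
  have := sqr_ge0 (sqnorm (S z) - sqnorm (Ss z)).
  by move: cs; move: (sqnorm (S z)) (sqnorm (Ss z)) => a b; nra.
have := le_normcD (2 * c1 ^+ 2 - c2) c2; rewrite subrK -/N.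
by rewrite normcM normcMn normc1 expr2 normcM -expr2; lra.
Qed.

Lemma Re_form_sum_sharp :
  complex.Re (q (Ss (S z) + S (Ss z) + 4 *: Ss (S (Ss (S z)))) z) =
  sqnorm (S z) + sqnorm (Ss z) + 4 * sqnorm (Ss (S z)).
Proof.
rewrite sqnorm_sharp_mulE sqnorm_mulE sqnorm_sharpE !(sesqDl formL) (sesqZl formL).
move: (q (Ss (S z)) z) (q (S (Ss z)) z) (q (Ss (S (Ss (S z)))) z).
by move=> [? ?] [? ?] [? ?]; simpc => /=; ring.
Qed.

Lemma numerical_radius_pointwise :
  normc (q (S z) z) ^+ 2 + sqnorm (S z) ^+ 2 <=
  1 / 4 * hnorm q (Ss (S z) + S (Ss z) + 4 *: Ss (S (Ss (S z))))
  + 1 / 2 * normc (q (S (S z)) z).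
Proof.
have := Re_form_le_hnorm (Ss (S z) + S (Ss z) + 4 *: Ss (S (Ss (S z)))).
by rewrite Re_form_sum_sharp; have := sqr_normc_form_le; have := sqr_sqnorm_mul_le; lra.
Qed.

End SharpEstimates.

Section SupBound.
Variables (R : realType) (I : Type) (U : set I).

(* Qualified: [reals] exports an unrelated lemma named [sup0]. *)
Local Notation supU h := (Defs.sup0 [set (h i)%:E | i in U]).

Lemma supU_ge0 (h : I -> R) : (0 <= supU h)%E.
Proof. by apply: ereal_sup_ubound; right. Qed.

Lemma supU_ub (h : I -> R) i : U i -> ((h i)%:E <= supU h)%E.
Proof. by move=> Ui; apply: ereal_sup_ubound; left; exists i. Qed.

Lemma sup0_sqr_le (d f g : I -> R) (a b : R) :
    0 < a -> 0 < b -> (forall i, U i -> d i ^+ 2 <= a * f i + b * g i) ->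
  (supU d * supU d <= a%:E * supU f + b%:E * supU g)%E.
Proof.
move=> a_gt0 b_gt0 d_le.
have scaled_neq_ninfty (x : \bar R) : (0 <= x)%E -> (b%:E * x != -oo)%E.
  by move=> x_ge0; rewrite gt_eqF // (lt_le_trans _ (mule_ge0 _ x_ge0)) ?lee_fin ?ltW.
move: (supU_ge0 f) (supU_ge0 g) (@supU_ub f) (@supU_ub g).
case: (supU f) => [F||] // F_ge0; last first.
  by move=> G_ge0 _ _; rewrite gt0_muley ?lte_fin // addye ?leey ?scaled_neq_ninfty.
case: (supU g) => [G||] // G_ge0; last first.
  by move=> _ _; rewrite gt0_muley ?lte_fin // addey ?leey.
rewrite !lee_fin in F_ge0 G_ge0 *; move=> f_le g_le; rewrite -!EFinM -EFinD.
have X_ge0 : 0 <= a * F + b * G by rewrite addr_ge0 // mulr_ge0 // ltW.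
have d_le_sqrt : (supU d <= (Num.sqrt (a * F + b * G))%:E)%E.
  apply: ge_ereal_sup => _ [[i Ui <-]|->]; rewrite lee_fin ?sqrtr_ge0 //.
  apply: le_trans (ler_norm _) _; rewrite -sqrtr_sqr ler_sqrt //.
  apply: le_trans (d_le i Ui) _.
  apply: lerD; apply: ler_wpM2l; rewrite ?(ltW a_gt0) ?(ltW b_gt0) // -lee_fin.
  - exact: f_le.
  - exact: g_le.
move: (supU_ge0 d) d_le_sqrt; case: (supU d) => [D||] //; rewrite !lee_fin => D_ge0 D_le.
by rewrite -[a * F + b * G]sqr_sqrtr // expr2 ler_pM.
Qed.

End SupBound.

Theorem corollary2p22 (R : realType) (V : lmodType R[i]) (ip : V -> V -> R[i])
    (A S : V -> V) :
  is_hilbert ip -> positive_op ip A -> in_BA ip A S ->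
  let Ss := sharpA ip A S in
  let T := fun z => Ss (S z) + S (Ss z) + (4 : R[i]) *: Ss (S (Ss (S z))) in
  (domegaA ip A S * domegaA ip A S <=
     (1 / 4 : R)%:E * opnormA ip A T
     + (1 / 2 : R)%:E * omegaA ip A (fun z => S (S z)))%E.
Proof.
move=> [[ipL ipH ipP ip_def] ip_complete] A_pos S_BA /=.
have [[A_lin _] A_ge0] := A_pos.
pose q x y := ip (A x) y.
have qL a x y z : q (a *: x + y) z = a * q x z + q y z by rewrite /q A_lin ipL.
have qH : forall x y, q y x = conjc (q x y).
  apply: hermitian_of_real_diag => [x y z|a x z|x y z|a x z|x]; rewrite /q.
  - by rewrite (lmapD A_lin) (sesqDl ipL).
  - by rewrite (lmapZ A_lin) (sesqZl ipL).
  - exact: sesqDr ipL ipH _ _ _.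
  - exact: sesqZr ipL ipH _ _ _.
  - exact: ger0_Im (A_ge0 x).
have sharpP : forall x y, q (sharpA ip A S x) y = q x (S y) :=
  sharpA_adjoint ipL ipH ipP ip_def ip_complete A_pos S_BA.
apply: sup0_sqr_le => // z z_unit.
have z1 : sqnorm q z = 1.
  change (hnorm q z = 1) in z_unit.
  by rewrite -[sqnorm q z]sqr_sqrtr ?(sqnorm_ge0 A_ge0) // -hnormE z_unit expr1n.
have normA4 : normA ip A (S z) ^+ 4 = sqnorm q (S z) ^+ 2.
  by rewrite -(sqr_sqrtr (sqnorm_ge0 A_ge0 (S z))) -exprM.
rewrite normA4 sqr_sqrtr ?addr_ge0 ?sqr_ge0 //.
apply: (numerical_radius_pointwise qL qH A_ge0 sharpP z1).
Qed.
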